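(* In the toy model (see context), let $S=\sum_{i=0}^{L-1}[\![\Delta\alpha_i]\!]$ and $\omega_i=\Delta\alpha_i-[\![\Delta\alpha_i]\!]$. Define an integer vector $\vec J$ by: if $S\ge0$, $J_i=1$ for the $S+1$ indices $i$ with the smallest values of $\omega_i$ and $J_i=0$ otherwise; if $S<0$, $J_i=-1$ for the $|S|-1$ indices $i$ with the largest values of $\omega_i$ and $J_i=0$ otherwise. Let $k^+\in\{0,\dots,L-1\}$ be given by $k^+\equiv\sum_{i=0}^{L-1}i\,(-[\![\Delta\alpha_i]\!]+J_i)\pmod L$. Then the almost surely unique (up to adding a common integer) threshold configuration $\vec m^+$ of the toy model satisfies $$\Delta m^+_i=-[\![\Delta\alpha_i]\!]+J_i-\delta_{ik^+}\quad\text{for all }i.$$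
   Context: Toy model: $L$ sites with periodic boundary conditions (indices mod $L$); disorder $\alpha_0,\dots,\alpha_{L-1}$ i.i.d. uniform on $(-\tfrac12,\tfrac12)$, extended periodically; $\Delta x_i=x_{i-1}-2x_i+x_{i+1}$ is the periodic discrete Laplacian; $[\![x]\!]$ denotes the integer nearest to $x$; $\delta_{ik}$ is the Kronecker delta. A configuration is $\vec m\in\mathbb Z^L$, with (rescaled, zero-force) well coordinates $z_i=\Delta m_i+\Delta\alpha_i$. A threshold configuration is a configuration $\vec m^+$ attaining $\min_{\vec m\in\mathbb Z^L}\max_i z_i$. *)

From HB Require Import structures.
From mathcomp Require Import all_boot all_order all_algebra.
From mathcomp Require Import reals.
Set Implicit Arguments. Unset Strict Implicit. Unset Printing Implicit Defensive.
Import Order.TTheory GRing.Theory Num.Theory.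
Local Open Scope ring_scope.

Section ToyModel.
Variable R : realType.
Variable L : nat.

Definition lapR (x : 'I_L -> R) (i : 'I_L) : R :=
  x (ord_pred i) - 2 * x i + x (ordS i).
Definition lapZ (x : 'I_L -> int) (i : 'I_L) : int :=
  x (ord_pred i) - 2 * x i + x (ordS i).

(* nearest integer [[x]]; at half-integers (a null event) we round up *)
Definition rnd (x : R) : int := Num.floor (x + 2^-1).

Definition zcoord (alpha : 'I_L -> R) (m : 'I_L -> int) (i : 'I_L) : R :=
  (lapZ m i)%:~R + lapR alpha i.

(* m is a threshold configuration: max_i z_i(m) <= max_i z_i(m') for all m'
   (i.e. m attains min_{m'} max_i z_i(m')) *)
Definition is_threshold (alpha : 'I_L -> R) (m : 'I_L -> int) : Prop :=
  forall m' : 'I_L -> int, exists i : 'I_L, forall j : 'I_L,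
    zcoord alpha m j <= zcoord alpha m' i.

Definition Ssum (alpha : 'I_L -> R) : int := \sum_(i < L) rnd (lapR alpha i).
Definition omega (alpha : 'I_L -> R) (i : 'I_L) : R :=
  lapR alpha i - (rnd (lapR alpha i))%:~R.

(* J: if S >= 0, J_i = 1 for the S+1 indices with smallest omega (i is among
   them iff fewer than S+1 indices have strictly smaller omega), else 0;
   if S < 0, J_i = -1 for the |S|-1 indices with largest omega, else 0. *)
Definition Jvec (alpha : 'I_L -> R) (i : 'I_L) : int :=
  let S := Ssum alpha in
  if 0 <= S then
    (if (#|[set j | omega alpha j < omega alpha i]|%:Z < S + 1) then 1 else 0)
  else
    (if (#|[set j | omega alpha i < omega alpha j]|%:Z < `|S|%:Z - 1) then -1 else 0).

Definition kplus (alpha : 'I_L -> R) : int :=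
  ((\sum_(i < L) (i : nat)%:Z * (- rnd (lapR alpha i) + Jvec alpha i)) %% (L : int))%Z.

Definition toy_claim (alpha : 'I_L -> R) : Prop :=
  (exists m, is_threshold alpha m) /\
  forall m, is_threshold alpha m -> forall i : 'I_L,
    lapZ m i = - rnd (lapR alpha i) + Jvec alpha i - ((i : nat)%:Z == kplus alpha)%:Z.

Definition lebesgue_null (N : ('I_L -> R) -> Prop) : Prop :=
  forall eps : R, 0 < eps ->
    exists a b : nat -> 'I_L -> R,
      (forall n i, a n i <= b n i) /\
      (forall x, N x -> exists n, forall i, a n i <= x i <= b n i) /\
      (forall n, \sum_(k < n) \prod_(i < L) (b k i - a k i) <= eps).

(* the event fails only on a null set of the disorder cube (-1/2,1/2)^L,
   i.e. holds almost surely for i.i.d. uniform alpha_i *)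
Definition almost_surely (P : ('I_L -> R) -> Prop) : Prop :=
  lebesgue_null (fun alpha => (forall i, - 2^-1 < alpha i < 2^-1) /\ ~ P alpha).

End ToyModel.

(* Write the well coordinates as z_i = (Delta m_i + [[Delta alpha_i]]) + omega_i
   with omega_i in [-1/2, 1/2).  When the omega_i are pairwise distinct, the
   integer vector w = J - delta_{k+} is nearly flat: w_j + omega_j < w_i + omega_i + 1
   for i <> k+, and < w_{k+} + omega_{k+} + 2.  Moreover w - [[Delta alpha]] has
   zero sum and first moment divisible by L, which characterises the image of the
   periodic Laplacian, so it equals Delta m0 for some m0.  If every well of a
   configuration m lies below max_j (w_j + omega_j), then t = w - (Delta m + [[Delta alpha]])
   is >= 0 off k+, >= -1 at k+, has zero sum and moment divisible by L, hence
   t = 0; this shows at once that m0 is a threshold configuration and that every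
   threshold configuration has Delta m = Delta m0.  Finally omega_i = omega_j for
   some i <> j puts alpha on one of finitely many hyperplanes, a null set. *)

From HB Require Import structures.
From mathcomp Require Import all_boot all_order all_algebra.
From mathcomp Require Import reals.
From mathcomp Require Import ring lra zify.
Set Implicit Arguments. Unset Strict Implicit. Unset Printing Implicit Defensive.
Import Order.TTheory GRing.Theory Num.Theory.
Local Open Scope ring_scope.

Lemma ordS_val n (i : 'I_n.+1) : val (ordS i) = if (i < n)%N then i.+1 else 0%N.
Proof.
rewrite /=; case: ltnP => h; first by rewrite modn_small.
have -> : (i : nat) = n by have := ltn_ord i; lia.
by rewrite modnn.
Qed.

Lemma ord_pred_val n (i : 'I_n.+1) : val (ord_pred i) = if (0 < i)%N then i.-1 else n.
Proof.
rewrite /=; case: ifP => h.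
  have -> : (i + n.+1).-1 = i.-1 + n.+1 by lia.
  by rewrite modnDr modn_small //; have := ltn_ord i; lia.
have -> : (i : nat) = 0%N by lia.
by rewrite add0n modn_small.
Qed.

Lemma ordS_neq n (i : 'I_n.+1) : (0 < n)%N -> ordS i != i.
Proof. by move=> n0; rewrite -val_eqE ordS_val /=; have := ltn_ord i; case: ifP; lia. Qed.

Lemma ord_pred_neq n (i : 'I_n.+1) : (0 < n)%N -> ord_pred i != i.
Proof. by move=> n0; rewrite -val_eqE ord_pred_val /=; have := ltn_ord i; case: ifP; lia. Qed.

Lemma sum_ordS (V : nmodType) n (f : 'I_n -> V) : \sum_i f (ordS i) = \sum_i f i.
Proof. by rewrite [RHS](reindex_inj (@ordS_inj n)). Qed.

Lemma sum_ord_pred (V : nmodType) n (f : 'I_n -> V) : \sum_i f (ord_pred i) = \sum_i f i.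
Proof. by rewrite [RHS](reindex_inj (@ord_pred_inj n)). Qed.

Lemma sum_partial_sums (V : nat -> int) N :
  \sum_(t < N) \sum_(s < t.+1) V s + \sum_(s < N) (s : nat)%:Z * V s
  = N%:Z * \sum_(s < N) V s.
Proof.
elim: N => [|N IH]; first by rewrite !big_ord0 mul0r addr0.
rewrite !big_ord_recr /= -[N.+1]addn1 PoszD.
move: IH; set A := \sum_(i < N) _; set B := \sum_(i < N) _; set C := \sum_(i < N) _.
move=> IH.
have -> : (N%:Z + 1) * (C + V N) = N%:Z * C + (C + V N) + N%:Z * V N by ring.
rewrite -IH; ring.
Qed.

Section Laplacian.
Variables (R : realType) (L : nat).

Lemma sum_lapR (x : 'I_L -> R) : \sum_i lapR x i = 0.
Proof. by rewrite /lapR !big_split /= sumrN -mulr_sumr sum_ord_pred sum_ordS; lra. Qed.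

Lemma sum_lapZ (m : 'I_L -> int) : \sum_i lapZ m i = 0.
Proof. by rewrite /lapZ !big_split /= sumrN -mulr_sumr sum_ord_pred sum_ordS; ring. Qed.

Definition lap_coef (i q : 'I_L) : R :=
  (ord_pred i == q)%:R - 2 * (i == q)%:R + (ordS i == q)%:R.

Lemma lapR_coefE (x : 'I_L -> R) i : lapR x i = \sum_q lap_coef i q * x q.
Proof.
have pick (a : 'I_L) : \sum_q (a == q)%:R * x q = x a.
  rewrite (bigD1 a) //= eqxx mul1r big1 ?addr0 // => q.
  by rewrite eq_sym => /negbTE ->; rewrite mul0r.
rewrite (eq_bigr (fun q => (ord_pred i == q)%:R * x q - 2 * ((i == q)%:R * x q)
   + (ordS i == q)%:R * x q)); last by move=> q _; rewrite /lap_coef; ring.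
by rewrite big_split /= sumrB -mulr_sumr !pick.
Qed.

End Laplacian.

Lemma lap_coef_diag_lt0 (R : realType) n (i : 'I_n.+2) : lap_coef R i i < 0.
Proof.
rewrite /lap_coef eqxx (negbTE (ordS_neq _ _)) ?(negbTE (ord_pred_neq _ _)) //=.
lra.
Qed.

Lemma lap_coef_offdiag_ge0 (R : realType) L (i j : 'I_L) : i != j -> 0 <= lap_coef R j i.
Proof. by rewrite /lap_coef eq_sym => /negbTE ->; rewrite mulr0 subr0 addr_ge0. Qed.

Lemma lapZ_moment_dvd L (m : 'I_L -> int) : (L%:Z %| \sum_(i < L) (i : nat)%:Z * lapZ m i)%Z.
Proof.
case: L m => [|n] m; first by rewrite big_ord0.
have shift (i : 'I_n.+1) :
    (n.+1%:Z %| (ordS i : nat)%:Z + (ord_pred i : nat)%:Z - 2 * (i : nat)%:Z)%Z.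
  have := ltn_ord i; rewrite ordS_val ord_pred_val.
  case: ifP => [/idP lt_in|/negbT le_ni]; case: ifP => [/idP i_gt0|/negbT i0] i_lt.
  - by apply/dvdzP; exists 0; lia.
  - by apply/dvdzP; exists 1; lia.
  - by apply/dvdzP; exists (-1); lia.
  - by apply/dvdzP; exists 0; lia.
have -> : \sum_(i < n.+1) (i : nat)%:Z * lapZ m i =
    \sum_(i < n.+1) ((ordS i : nat)%:Z + (ord_pred i : nat)%:Z - 2 * (i : nat)%:Z) * m i.
  have pred_shift : \sum_(i < n.+1) (i : nat)%:Z * m (ord_pred i)
      = \sum_(i < n.+1) (ordS i : nat)%:Z * m i.
    by rewrite -[RHS]sum_ord_pred; apply: eq_bigr => i _; rewrite ord_predK.
  have succ_shift : \sum_(i < n.+1) (i : nat)%:Z * m (ordS i)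
      = \sum_(i < n.+1) (ord_pred i : nat)%:Z * m i.
    by rewrite -[RHS]sum_ordS; apply: eq_bigr => i _; rewrite ordSK.
  rewrite /lapZ (eq_bigr (fun i : 'I_n.+1 => (i : nat)%:Z * m (ord_pred i)
    + (i : nat)%:Z * m (ordS i) - 2 * (i : nat)%:Z * m i)); last by move=> i _; ring.
  rewrite sumrB big_split /= pred_shift succ_shift -big_split -sumrB /=.
  by apply: eq_bigr => i _; ring.
by apply: rpred_sum => i _; apply: dvdz_mulr.
Qed.

(* [m] is a discrete double antiderivative of [v]; the constant [q] of the
   first antiderivative [d] is chosen so that [d] sums to zero, which is what
   makes [m] periodic. *)
Lemma lapZ_onto n (v : 'I_n.+1 -> int) :
  \sum_i v i = 0 -> (n.+1%:Z %| \sum_(i < n.+1) (i : nat)%:Z * v i)%Z ->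
  exists m : 'I_n.+1 -> int, forall i, lapZ m i = v i.
Proof.
move=> sum_v /dvdzP [q moment_v].
pose V t := v (inord t).
have sumV : \sum_(s < n.+1) V s = 0.
  by rewrite -[RHS]sum_v; apply: eq_bigr => i _; rewrite /V inord_val.
have momentV : \sum_(s < n.+1) (s : nat)%:Z * V s = q * n.+1%:Z.
  by rewrite -[RHS]moment_v; apply: eq_bigr => i _; rewrite /V inord_val.
pose d t := \sum_(s < t.+1) V s + q.
pose M k := \sum_(s < k) d s.
have sum_d : \sum_(s < n.+1) d s = 0.
  have := sum_partial_sums V n.+1; rewrite sumV momentV mulr0.
  by rewrite /d big_split /= sumr_const card_ord -mulr_natr natz; apply.
have dM (i : 'I_n.+1) : M (ordS i) - M i = d i.
  rewrite ordS_val; case: ifP => [_|/negbT i_ge_n]; first by rewrite /M big_ord_recr /=; ring.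
  have -> : (i : nat) = n by have := ltn_ord i; lia.
  move/eqP: sum_d; rewrite big_ord_recr /= addr_eq0 => /eqP sum_d.
  by rewrite /M big_ord0 sum_d sub0r opprK.
have dd (i : 'I_n.+1) : d i - d (ord_pred i) = v i.
  rewrite ord_pred_val; case: ifP => [i_gt0|/negbT i_le0]; last first.
    have i0 : (i : nat) = 0%N by lia.
    rewrite /d i0 sumV big_ord1 /V.
    have -> : inord 0 = i by apply: val_inj; rewrite /= inordK.
    ring.
  have -> : (i : nat) = i.-1.+1 by lia.
  rewrite /d [in X in X - _]big_ord_recr /=.
  have -> : V i.-1.+1 = v i by rewrite /V prednK // inord_val.
  ring.
exists (fun i => M i) => i.
have := dM (ord_pred i); rewrite ord_predK /lapZ.
have := dM i; have := dd i; lia.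
Qed.

Lemma card_rank_lt d (T : orderType d) n (f : 'I_n -> T) N :
  injective f -> (N <= n)%N -> #|[set i | (#|[set j | (f j < f i)%O]| < N)%N]| = N.
Proof.
move=> f_inj le_Nn; pose rank i := #|[set j | (f j < f i)%O]|.
have rank_lt i : (rank i < n)%N.
  rewrite /rank -[X in (_ < X)%N](card_ord n); apply: proper_card.
  by apply/properP; split; [apply/subsetP => x; rewrite inE | exists i; rewrite ?inE ?ltxx].
have rank_mono i j : (f i < f j)%O -> (rank i < rank j)%N.
  move=> fij; apply: proper_card; apply/properP; split.
    by apply/subsetP => x; rewrite !inE => /lt_trans; apply.
  by exists i; rewrite !inE ?fij ?ltxx.
have rank_inj : injective (fun i => Ordinal (rank_lt i)).
  move=> i j /(congr1 val) /= rank_ij; apply: f_inj.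
  by case: (ltgtP (f i) (f j)) => // /rank_mono; rewrite rank_ij ltnn.
have card_lt : #|[set t : 'I_n | (t < N)%N]| = N.
  rewrite -sum1_card (eq_bigl (fun t : 'I_n => (t < N)%N)) => [|t]; last by rewrite inE.
  by rewrite -(big_ord_widen_cond _ (fun _ => true) (fun _ => 1%N) le_Nn) sum1_card card_ord.
rewrite -[RHS]card_lt -[RHS](card_preimset _ rank_inj).
by apply: eq_card => i; rewrite !inE.
Qed.

Lemma sum_indicator n (P : pred 'I_n) :
  \sum_i (if P i then 1 else 0 : int) = #|[set i | P i]|%:Z.
Proof.
rewrite -big_mkcond sumr_const -natz; congr (_%:R).
by apply: eq_card => i; rewrite inE.
Qed.

Section Disorder.
Variables (R : realType) (L : nat) (alpha : 'I_L -> R).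

Lemma omega_itv i : - 2^-1 <= omega alpha i < 2^-1.
Proof.
have /andP [fl_le fl_gt] := floor_itv (lapR alpha i + 2^-1).
by rewrite /omega /rnd; rewrite intrD in fl_gt; apply/andP; split; lra.
Qed.

Lemma Ssum_omega : (Ssum alpha)%:~R = - \sum_i omega alpha i :> R.
Proof. by rewrite /omega sumrB sum_lapR sub0r opprK /Ssum rmorph_sum. Qed.

Lemma Ssum_bound : 2 * `|Ssum alpha| <= L%:Z.
Proof.
have sum_le : \sum_i omega alpha i <= \sum_(i < L) (2^-1 : R).
  by apply: ler_sum => i _; have /andP [_ /ltW] := omega_itv i.
have sum_ge : \sum_(i < L) (- 2^-1 : R) <= \sum_i omega alpha i.
  by apply: ler_sum => i _; have /andP [] := omega_itv i.
rewrite !sumr_const card_ord in sum_le sum_ge.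
rewrite -mulr_natl in sum_le; rewrite -mulr_natl in sum_ge.
rewrite -(ler_int R) intrM intr_norm Ssum_omega normrN.
have -> : ((L%:Z)%:~R : R) = L%:R by [].
have -> : ((2 : int)%:~R : R) = 2 by [].
move: sum_le sum_ge; set s := \sum_i _ => sum_le sum_ge.
rewrite -ler_pdivlMl ?ler_norml; last by lra.
apply/andP; split; lra.
Qed.

Lemma Jvec_pos i : 0 <= Ssum alpha -> Jvec alpha i =
  if (#|[set j | omega alpha j < omega alpha i]|%:Z < Ssum alpha + 1) then 1 else 0.
Proof. by rewrite /Jvec /= => ->. Qed.

Lemma Jvec_neg i : Ssum alpha < 0 -> Jvec alpha i =
  - if (#|[set j | omega alpha i < omega alpha j]|%:Z < `|Ssum alpha|%:Z - 1) then 1 else 0.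
Proof. by rewrite /Jvec /= => /lt_geF ->; case: ifP. Qed.

Lemma sum_Jvec : (0 < L)%N -> injective (omega alpha) ->
  \sum_i Jvec alpha i = Ssum alpha + 1.
Proof.
move=> L_gt0 omega_inj; have S_bound := Ssum_bound.
case: (leP 0 (Ssum alpha)) => [S_ge0|S_lt0].
  rewrite (eq_bigr _ (fun i _ => Jvec_pos i S_ge0)) sum_indicator.
  have [n Sn] : exists n : nat, Ssum alpha = n%:Z by exists `|Ssum alpha|%N; lia.
  rewrite Sn (eq_card (B := [set i |
    (#|[set j | (omega alpha j < omega alpha i)%R]| < n.+1)%N])).
    by rewrite card_rank_lt //; move: S_bound; rewrite Sn; lia.
  by move=> i; rewrite !inE; apply/idP/idP; lia.
rewrite (eq_bigr _ (fun i _ => Jvec_neg i S_lt0)) sumrN sum_indicator.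
have oppomega_inj : injective (fun i => - omega alpha i) by move=> i j /oppr_inj /omega_inj.
rewrite (eq_card (B := [set i | (#|[set j | (- omega alpha j < - omega alpha i)%R]|
    < `|Ssum alpha| - 1)%N])).
  by rewrite card_rank_lt //; lia.
move=> i; rewrite !inE.
have -> : #|[set j | - omega alpha j < - omega alpha i]|
    = #|[set j | omega alpha i < omega alpha j]| by apply: eq_card => j; rewrite !inE ltrN2.
lia.
Qed.

Lemma Jvec_antitone i j : omega alpha i <= omega alpha j -> Jvec alpha j <= Jvec alpha i.
Proof.
move=> le_ij; case: (leP 0 (Ssum alpha)) => [S_ge0|S_lt0].
  rewrite !Jvec_pos //.
  have : (#|[set x | (omega alpha x < omega alpha i)%R]|
      <= #|[set x | (omega alpha x < omega alpha j)%R]|)%N.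
    by apply/subset_leq_card/subsetP => x; rewrite !inE => /lt_le_trans; apply.
  by do 2 case: ifP; lia.
rewrite !Jvec_neg //.
have : (#|[set x | (omega alpha j < omega alpha x)%R]|
    <= #|[set x | (omega alpha i < omega alpha x)%R]|)%N.
  by apply/subset_leq_card/subsetP => x; rewrite !inE; apply: le_lt_trans.
by do 2 case: ifP; lia.
Qed.

Lemma Jvec_le_add1 i j : Jvec alpha j <= Jvec alpha i + 1.
Proof. by rewrite /Jvec; case: ifP; do 2 case: ifP; lia. Qed.

Lemma Jvec_omega_spread i j :
  (Jvec alpha j)%:~R + omega alpha j < (Jvec alpha i)%:~R + omega alpha i + 1.
Proof.
have /andP [ge_i lt_i] := omega_itv i; have /andP [ge_j lt_j] := omega_itv j.
case: (leP (omega alpha i) (omega alpha j)) => [le_ij|lt_ji].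
  by have := Jvec_antitone le_ij; rewrite -(ler_int R); lra.
by have := Jvec_le_add1 i j; rewrite -(ler_int R) intrD; lra.
Qed.
End Disorder.

Lemma zero_sum_moment_eq0 n (t : 'I_n -> int) (k : 'I_n) :
  (forall i, i != k -> 0 <= t i) -> -1 <= t k -> \sum_i t i = 0 ->
  (n%:Z %| \sum_(i < n) (i : nat)%:Z * t i)%Z -> forall i, t i = 0.
Proof.
move=> t_ge0 t_k_ge sum_t0 moment_t.
have nonneg_eq0 : 0 <= t k -> forall i, t i = 0.
  move=> t_k_ge0 i; apply: (@psumr_eq0P _ _ predT t) => // i' _.
  by case: (eqVneq i' k) => [->|/t_ge0].
case: (leP 0 (t k)) => [|t_k_lt0]; first exact: nonneg_eq0.
have t_k : t k = -1 by lia.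
move: sum_t0; rewrite (bigD1 k) //= t_k => /eqP; rewrite addrC subr_eq0 => /eqP sum_off.
have [j /andP [j_k t_j_neq0]] : exists j, (j != k) && (t j != 0).
  apply/existsP; apply: contraTT isT => /existsPn none; apply/negP.
  rewrite (eq_bigr (fun _ => 0)) ?big1_eq // in sum_off => i i_k.
  by have := none i; rewrite i_k /= negbK => /eqP.
move: sum_off; rewrite (bigD1 j) //=.
have rest_ge0 : 0 <= \sum_(i | (i != k) && (i != j)) t i.
  by apply: sumr_ge0 => i /andP [/t_ge0].
have := t_ge0 j j_k; move: t_j_neq0 rest_ge0.
set rest := \sum_(i | _) _ => t_j_neq0 rest_ge0 t_j_ge0 sum_off.
have t_j : t j = 1 by lia.
have rest_eq0 : forall i, (i != k) && (i != j) -> t i = 0.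
  by apply: psumr_eq0P => [i /andP [/t_ge0] //|]; rewrite -/rest; lia.
move: moment_t; rewrite (bigD1 k) //= (bigD1 j) //= big1 => [|i ikj]; last first.
  by rewrite rest_eq0 ?mulr0.
rewrite t_k t_j addr0 mulr1 mulrN1 => /dvdzP [q moment].
have := ltn_ord j; have := ltn_ord k.
have j_neq_k : (j : nat) != k by [].
have [q0|[q_ge1|q_le]] : q = 0 \/ 1 <= q \/ q <= -1 by lia.
- by move: moment; rewrite q0; lia.
- have : n%:Z <= q * n%:Z by rewrite -[X in X <= _]mul1r ler_wpM2r.
  lia.
- have : q * n%:Z <= - n%:Z by rewrite -mulN1r ler_wpM2r.
  lia.
Qed.

Lemma dominated_config_eq (R : realType) n (om : 'I_n -> R) (w w' : 'I_n -> int) (k : 'I_n) :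
  (forall i, i != k -> forall j, (w j)%:~R + om j < (w i)%:~R + om i + 1) ->
  (forall j, (w j)%:~R + om j < (w k)%:~R + om k + 2) ->
  \sum_i w' i = \sum_i w i ->
  (n%:Z %| \sum_(i < n) (i : nat)%:Z * (w i - w' i))%Z ->
  (forall i, exists j, (w' i)%:~R + om i <= (w j)%:~R + om j) ->
  w' =1 w.
Proof.
move=> spread_off spread_at sum_eq moment_dvd dominated.
have below j s : (forall l, (w l)%:~R + om l < (w j)%:~R + om j + s%:~R) -> w' j < w j + s.
  move=> bound; have [l le_l] := dominated j; have := bound l.
  by rewrite -(ltr_int R) intrD; lra.
have diff_eq0 := @zero_sum_moment_eq0 n (fun i => w i - w' i) k.
move=> i; suff : w i - w' i = 0 by lia.
apply: diff_eq0 => [j j_k|||] //.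
- by have := below j 1 (spread_off j j_k); lia.
- by have := below k 2 spread_at; lia.
- by rewrite sumrB sum_eq subrr.
Qed.

Lemma zcoordE (R : realType) L (alpha : 'I_L -> R) m i :
  zcoord alpha m i = (lapZ m i + rnd (lapR alpha i))%:~R + omega alpha i.
Proof. by rewrite /zcoord /omega intrD; ring. Qed.

Section ThresholdConfiguration.
Variables (R : realType) (n : nat) (alpha : 'I_n.+1 -> R).
Hypothesis omega_inj : injective (omega alpha).

Let k : 'I_n.+1 := inord `|kplus alpha|.
Let r i := rnd (lapR alpha i).
Let w i := Jvec alpha i - (i == k)%:Z.

Lemma kplus_ord_val : (k : nat)%:Z = kplus alpha.
Proof.
have k_ge0 : 0 <= kplus alpha by apply: modz_ge0.
have k_lt : kplus alpha < n.+1%:Z by apply: ltz_pmod.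
by rewrite /k inordK; lia.
Qed.

Lemma kplus_ordE i : ((i : nat)%:Z == kplus alpha) = (i == k).
Proof. by rewrite -kplus_ord_val eqz_nat. Qed.

Lemma target_sum : \sum_i (w i - r i) = 0.
Proof.
rewrite /w /r !sumrB sum_Jvec // (bigD1 k) //= eqxx big1 => [|i /negbTE ->] //.
by rewrite addr0 /Ssum addrK subrr.
Qed.

Lemma target_moment : (n.+1%:Z %| \sum_(i < n.+1) (i : nat)%:Z * (w i - r i))%Z.
Proof.
pose c := \sum_(i < n.+1) (i : nat)%:Z * (- rnd (lapR alpha i) + Jvec alpha i).
have -> : \sum_(i < n.+1) (i : nat)%:Z * (w i - r i) = c - (k : nat)%:Z.
  rewrite /c -[X in _ - X](_ : \sum_(i < n.+1) (i : nat)%:Z * (i == k)%:Z = _).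
    by rewrite -sumrB; apply: eq_bigr => i _; rewrite /w /r; ring.
  by rewrite (bigD1 k) //= eqxx mulr1 big1 ?addr0 // => i /negbTE ->; rewrite mulr0.
by rewrite kplus_ord_val {1}(divz_eq c n.+1%:Z) addrK dvdz_mull.
Qed.

Lemma dominated_lapZ_eq m :
  (forall i, exists j, zcoord alpha m i <= (w j)%:~R + omega alpha j) ->
  forall i, lapZ m i + r i = w i.
Proof.
move=> dominated.
have w_le j : ((w j)%:~R : R) <= (Jvec alpha j)%:~R by rewrite ler_int /w; case: (j == k); lia.
apply: (@dominated_config_eq R _ (omega alpha) w _ k).
- move=> i i_k j; have w_i : w i = Jvec alpha i by rewrite /w (negbTE i_k) subr0.
  by have := Jvec_omega_spread alpha i j; have := w_le j; rewrite w_i; lra.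
- move=> j; have w_k : ((w k)%:~R : R) = (Jvec alpha k)%:~R - 1 by rewrite /w eqxx intrB.
  by have := Jvec_omega_spread alpha k j; have := w_le j; rewrite w_k; lra.
- rewrite big_split /= sum_lapZ add0r; apply/eqP.
  by rewrite eq_sym -subr_eq0 -sumrB target_sum.
- rewrite (eq_bigr (fun i : 'I_n.+1 => (i : nat)%:Z * (w i - r i) - (i : nat)%:Z * lapZ m i)).
    by rewrite sumrB rpredB ?target_moment ?lapZ_moment_dvd.
  by move=> i _; ring.
- by move=> i; have [j le_j] := dominated i; exists j; rewrite -zcoordE.
Qed.

Lemma toy_claim_of_omega_inj : toy_claim alpha.
Proof.
have [m0 m0_eq] : exists m0, forall i, lapZ m0 i = w i - r i.
  by apply: lapZ_onto; [exact: target_sum | exact: target_moment].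
have z_m0 i : zcoord alpha m0 i = (w i)%:~R + omega alpha i by rewrite zcoordE m0_eq subrK.
split.
  exists m0 => m'.
  have [i0 _ max_i0] := @arg_maxP _ _ _ ord0 predT (zcoord alpha m') isT.
  exists i0; apply/forallP; apply: contraT; rewrite negb_forall => /existsP [j].
  rewrite -ltNge z_m0 => above.
  have m'_eq := dominated_lapZ_eq
    (fun i => ex_intro _ j (le_trans (max_i0 i isT) (ltW above))).
  have := max_i0 j isT; rewrite /= [zcoord alpha m' j]zcoordE m'_eq => below.
  by have := lt_le_trans above below; rewrite ltxx.
move=> m threshold_m i; have [i1 le_i1] := threshold_m m0.
have below j : zcoord alpha m j <= (w i1)%:~R + omega alpha i1 by rewrite -z_m0.
have lapZ_eq := dominated_lapZ_eq (fun j => ex_intro _ i1 (below j)) i.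
rewrite kplus_ordE -[LHS](addrK (r i)) lapZ_eq /w /r; ring.
Qed.

End ThresholdConfiguration.

Section LebesgueNull.
Variables (R : realType) (L : nat).
Implicit Types N M : ('I_L -> R) -> Prop.

Lemma lebesgue_null_sub N M : (forall x, N x -> M x) -> lebesgue_null M -> lebesgue_null N.
Proof.
move=> NM null_M eps eps_gt0; have [a [b [ab [cover vol]]]] := null_M eps eps_gt0.
by exists a, b; split => //; split => // x /NM /cover.
Qed.

Lemma lebesgue_nullU N M :
  lebesgue_null N -> lebesgue_null M -> lebesgue_null (fun x => N x \/ M x).
Proof.
move=> null_N null_M eps eps_gt0.
have [a1 [b1 [ab1 [cover1 vol1]]]] := null_N _ (divr_gt0 eps_gt0 (ltr0Sn R 1)).
have [a2 [b2 [ab2 [cover2 vol2]]]] := null_M _ (divr_gt0 eps_gt0 (ltr0Sn R 1)).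
pose a k := if odd k then a2 k./2 else a1 k./2; pose b k := if odd k then b2 k./2 else b1 k./2.
pose vol k := \prod_i (b k i - a k i).
have vol_ge0 k : 0 <= vol k.
  by apply: prodr_ge0 => i _; rewrite subr_ge0 /a /b; case: ifP.
have vol_double m : \sum_(k < m.*2) vol k =
    \sum_(k < m) \prod_i (b1 k i - a1 k i) + \sum_(k < m) \prod_i (b2 k i - a2 k i).
  elim: m => [|m IH]; first by rewrite !big_ord0 addr0.
  rewrite doubleS !big_ord_recr /= IH /vol /a /b /= odd_double /= doubleK uphalf_double.
  lra.
exists a, b; split; [|split].
- by move=> k i; rewrite /a /b; case: ifP.
- move=> x [/cover1 [k x_k]|/cover2 [k x_k]].
    by exists k.*2; rewrite /a /b odd_double doubleK.
  by exists k.*2.+1; rewrite /a /b /= odd_double /= uphalf_double.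
move=> m; have : \sum_(k < m) vol k <= \sum_(k < m.*2) vol k.
  rewrite -!(big_mkord xpredT) (big_cat_nat (leq0n m) (_ : m <= m.*2)%N) /=.
    by rewrite lerDl; apply: sumr_ge0.
  by rewrite -addnn leq_addl.
by rewrite vol_double; have := vol1 m; have := vol2 m; rewrite /vol; lra.
Qed.

Hypothesis L_gt0 : (0 < L)%N.

Lemma lebesgue_null_finite_cover N :
  (forall eps, 0 < eps -> exists (m : nat) (a b : nat -> 'I_L -> R),
     [/\ forall k i, a k i <= b k i,
         forall x, N x -> exists2 k, (k < m)%N & forall i, a k i <= x i <= b k i &
         \sum_(k < m) \prod_i (b k i - a k i) <= eps]) ->
  lebesgue_null N.
Proof.
move=> finite_cover eps eps_gt0.
have [m [a [b [ab cover vol_le]]]] := finite_cover eps eps_gt0.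
pose a' k := if (k < m)%N then a k else fun _ => 0.
pose b' k := if (k < m)%N then b k else fun _ => 0.
exists a', b'; split; [|split].
- by move=> k i; rewrite /a' /b'; case: ifP.
- by move=> x /cover [k k_m x_k]; exists k; rewrite /a' /b' k_m.
move=> n; apply: le_trans vol_le.
rewrite -(big_mkord xpredT (fun k => \prod_i (b' k i - a' k i))).
rewrite -(big_mkord xpredT (fun k => \prod_i (b k i - a k i))).
case: (leqP n m) => [n_le_m|m_lt_n].
  rewrite (big_cat_nat (leq0n n) n_le_m) /= -[X in X <= _]addr0 lerD //.
    by apply: ler_sum_nat => k /andP [_ k_n]; rewrite /a' /b' (leq_trans k_n n_le_m).
  by apply: sumr_ge0 => k _; apply: prodr_ge0 => i _; rewrite subr_ge0.
rewrite (big_cat_nat (leq0n m) (ltnW m_lt_n)) /= [X in _ + X](_ : _ = 0) ?addr0.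
  by apply: ler_sum_nat => k /andP [_ k_m]; rewrite /a' /b' k_m.
rewrite big_nat_cond big1 // => k /andP [/andP [m_le_k _] _].
rewrite /a' /b' ltnNge m_le_k /= (eq_bigr (fun _ => 0)) => [|i _]; last by rewrite subrr.
by rewrite prodr_const card_ord expr0n eqn0Ngt L_gt0.
Qed.

Lemma lebesgue_null_bigcup (T : eqType) (N : T -> ('I_L -> R) -> Prop) (s : seq T) :
  (forall t, t \in s -> lebesgue_null (N t)) ->
  lebesgue_null (fun x => exists2 t, t \in s & N t x).
Proof.
elim: s => [_|t s IH null_N].
  apply: lebesgue_null_finite_cover => eps eps_gt0.
  by exists 0%N, (fun _ _ => 0), (fun _ _ => 0); split => // [x []|]; rewrite ?big_ord0 ?ltW.
have null_s : lebesgue_null (fun x => exists2 u, u \in s & N u x).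
  by apply: IH => u u_s; apply: null_N; rewrite in_cons u_s orbT.
apply: lebesgue_null_sub (lebesgue_nullU (null_N t (mem_head t s)) null_s) => x [u].
by rewrite in_cons => /orP [/eqP ->|u_s N_u]; [left | right; exists u].
Qed.
End LebesgueNull.

Section Hyperplane.
Variables (R : realType) (L : nat).

Definition grid_cell n (t : R) : 'I_n.+1 := inord (Num.truncn ((t + 2^-1) * n.+1%:R)).

Lemma grid_cellP n (t : R) : - 2^-1 < t < 2^-1 ->
  0 <= t - (- 2^-1 + (grid_cell n t : nat)%:R / n.+1%:R) <= n.+1%:R^-1.
Proof.
move=> /andP [t_gt t_lt]; have N_gt0 : (0 : R) < n.+1%:R by [].
have scaled_ge0 : 0 <= (t + 2^-1) * n.+1%:R by apply: mulr_ge0; lra.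
have /andP [trunc_le trunc_gt] := truncn_itv scaled_ge0.
have trunc_lt : (Num.truncn ((t + 2^-1) * n.+1%:R) < n.+1)%N.
  by rewrite truncn_lt_nat // -[X in _ < X]mul1r ltr_pM2r //; lra.
rewrite /grid_cell inordK //; move: trunc_le trunc_gt; set j := Num.truncn _.
rewrite -[j.+1%:R]natr1 => trunc_le trunc_gt.
have -> : t - (- 2^-1 + j%:R / n.+1%:R) = ((t + 2^-1) * n.+1%:R - j%:R) / n.+1%:R.
  by field; rewrite addrC natr1 pnatr_eq0.
apply/andP; split; first by apply: divr_ge0; [lra | exact: ltW].
by rewrite ler_pdivrMr // mulVf ?gt_eqF //; lra.
Qed.

Lemma hyperplane_coord_near (c : 'I_L -> R) (p : 'I_L) (d h : R) (x z : 'I_L -> R) :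
  c p != 0 -> 0 <= h -> \sum_i c i * x i = d -> (forall q, q != p -> `|x q - z q| <= h) ->
  `|x p - (d - \sum_(q | q != p) c q * z q) / c p| <= (\sum_i `|c i|) / `|c p| * h.
Proof.
move=> c_p h_ge0 on_hyperplane near; have c_p_gt0 : 0 < `|c p| by rewrite normr_gt0.
set E := \sum_(q | q != p) c q * (x q - z q).
have -> : x p - (d - \sum_(q | q != p) c q * z q) / c p = - E / c p.
  have -> : d - \sum_(q | q != p) c q * z q = c p * x p + E.
    have -> : E = \sum_(q | q != p) c q * x q - \sum_(q | q != p) c q * z q.
      by rewrite /E -sumrB; apply: eq_bigr => q _; rewrite mulrBr.
    by rewrite -on_hyperplane (bigD1 p) //= addrA.
  by field.
rewrite normrM normrN normfV ler_pdivrMr // mulrAC divfK ?gt_eqF //.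
apply: le_trans (ler_norm_sum _ _ _) _.
apply: (@le_trans _ _ (\sum_(q | q != p) `|c q| * h)).
  by apply: ler_sum => q q_p; rewrite normrM ler_wpM2l ?near.
by rewrite -mulr_suml ler_wpM2r // [X in _ <= X](bigD1 p) //= lerDr.
Qed.

Lemma sum_grid_degenerate n (p : 'I_L) (v : R) :
  \sum_(g : {ffun 'I_L -> 'I_n.+1})
    \prod_i (if i == p then (if g i == ord0 then v else 0) else n.+1%:R^-1) = v.
Proof.
pose F i (j : 'I_n.+1) := if i == p then (if j == ord0 then v else 0) else n.+1%:R^-1.
rewrite (eq_bigr (fun g : {ffun 'I_L -> 'I_n.+1} => \prod_i F i (g i))) // -bigA_distr_bigA /=.
rewrite (bigD1 p) //= [X in _ * X]big1 => [|i i_p].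
  by rewrite mulr1 /F eqxx (bigD1 ord0) //= big1 ?addr0 // => j /negbTE ->.
by rewrite /F (negbTE i_p) sumr_const card_ord -[_^-1 *+ _]mulr_natr mulVf ?pnatr_eq0.
Qed.

Hypothesis L_gt0 : (0 < L)%N.

(* Cut the cube into cells of mesh [h] in the coordinates other than [p]; over
   each cell the hyperplane stays within height [K h] of a point, so the cells
   carry boxes of total volume [2 K h].  The boxes are indexed by all grid maps
   [g], and those with [g p != 0] are taken degenerate. *)
Lemma lebesgue_null_hyperplane (c : 'I_L -> R) (p : 'I_L) (d : R) : c p != 0 ->
  lebesgue_null (fun x : 'I_L -> R =>
    (forall i, - 2^-1 < x i < 2^-1) /\ \sum_i c i * x i = d).
Proof.
move=> c_p; apply: lebesgue_null_finite_cover => // eps eps_gt0.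
pose K := (\sum_i `|c i|) / `|c p|.
have K_ge0 : 0 <= K by apply: divr_ge0 => //; apply: sumr_ge0.
pose n := Num.truncn (2 * K / eps); pose h : R := n.+1%:R^-1.
have N_gt0 : (0 : R) < n.+1%:R by [].
have h_gt0 : 0 < h by rewrite invr_gt0.
have mesh_small : 2 * K * h <= eps.
  have /andP [_] := truncn_itv (divr_ge0 (mulr_ge0 (ler0n R 2) K_ge0) (ltW eps_gt0)).
  by rewrite -/n ltr_pdivrMr // ler_pdivrMr // [eps * _]mulrC => /ltW.
pose T := {ffun 'I_L -> 'I_n.+1}.
pose corner (g : T) i : R := - 2^-1 + (g i : nat)%:R / n.+1%:R.
pose y (g : T) := (d - \sum_(q | q != p) c q * corner g q) / c p.
pose width i (j : 'I_n.+1) : R :=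
  if i == p then (if j == ord0 then 2 * K * h else 0) else h.
have Kh_ge0 : 0 <= 2 * K * h by apply: mulr_ge0; [exact: mulr_ge0 | exact: ltW].
have width_ge0 i j : 0 <= width i j.
  by rewrite /width; case: ifP => _; [case: ifP | exact: ltW].
pose a (g : T) i := if i == p then y g - K * h else corner g i.
pose b (g : T) i := a g i + width i (g i).
pose g0 : T := [ffun => ord0].
exists #|T|, (fun k => a (nth g0 (enum T) k)), (fun k => b (nth g0 (enum T) k)); split.
- by move=> k i; rewrite /b lerDl.
- move=> x [in_cube on_hyperplane].
  pose g : T := [ffun i => if i == p then ord0 else grid_cell n (x i)].
  exists (index g (enum T)); first by rewrite cardE index_mem mem_enum.
  rewrite nth_index ?mem_enum // => i.
  have near q : q != p -> 0 <= x q - corner g q <= h.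
    by move=> q_p; rewrite /corner ffunE (negbTE q_p); apply: grid_cellP.
  rewrite /b /a /width ffunE; case: (eqVneq i p) => [->|i_p]; last first.
    by have := near i i_p; lra.
  have near_abs q : q != p -> `|x q - corner g q| <= h.
    by move=> /near /andP [near_ge0 near_le]; rewrite ger0_norm.
  have := hyperplane_coord_near c_p (ltW h_gt0) on_hyperplane near_abs.
  by rewrite eqxx -/(y g) -/K ler_norml => /andP []; lra.
rewrite -(big_mkord xpredT
  (fun k => \prod_i (b (nth g0 (enum T) k) i - a (nth g0 (enum T) k) i))).
rewrite cardE -(big_nth g0 xpredT (fun g => \prod_i (b g i - a g i))) big_enum /=.
rewrite (eq_bigr (fun g : T => \prod_i width i (g i))) => [|g _]; last first.
  by apply: eq_bigr => i _; rewrite /b addrC addKr.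
by rewrite /width /h sum_grid_degenerate.
Qed.

End Hyperplane.

Lemma lap_coef_sub_neq0 (R : realType) L (i j : 'I_L) :
  i != j -> lap_coef R i i - lap_coef R j i != 0.
Proof.
case: L i j => [[] //|[|n] i j i_j]; first by rewrite !ord1 eqxx in i_j.
by rewrite ltr0_neq0 // subr_lt0 (lt_le_trans (lap_coef_diag_lt0 R i)) ?lap_coef_offdiag_ge0.
Qed.

Section Collision.
Variables (R : realType) (L : nat) (alpha : 'I_L -> R).
Hypothesis in_cube : forall i, - 2^-1 < alpha i < 2^-1.

Lemma lapR_cube_bound i : - 2 < lapR alpha i < 2.
Proof.
have := in_cube (ord_pred i); have := in_cube i; have := in_cube (ordS i).
by rewrite /lapR => /andP [? ?] /andP [? ?] /andP [? ?]; apply/andP; split; lra.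
Qed.

(* Equal fractional parts make [lapR alpha i - lapR alpha j] an integer, of
   absolute value below 4. *)
Lemma omega_collision i j : omega alpha i = omega alpha j ->
  exists u : 'I_7, \sum_q (lap_coef R i q - lap_coef R j q) * alpha q = ((u : nat)%:Z - 3)%:~R.
Proof.
move=> omega_ij; set z := rnd (lapR alpha i) - rnd (lapR alpha j).
have diff_z : lapR alpha i - lapR alpha j = z%:~R.
  by move: omega_ij; rewrite /omega intrB; lra.
have z_bound : -4 < z < 4.
  have four : ((4 : int)%:~R : R) = 4 by [].
  rewrite -!(ltr_int R) intrN four.
  by have := lapR_cube_bound i; have := lapR_cube_bound j; rewrite -diff_z; lra.
have u_lt : (absz (z + 3)%R < 7)%N by lia.
exists (Ordinal u_lt); rewrite /=; have -> : (absz (z + 3)%R)%:Z - 3 = z by lia.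
by rewrite -diff_z (eq_bigr (fun q => lap_coef R i q * alpha q - lap_coef R j q * alpha q))
  ?sumrB -?lapR_coefE // => q _; rewrite mulrBl.
Qed.

End Collision.

Theorem theorem1 (R : realType) (L : nat) (hL : (0 < L)%N) :
  almost_surely (@toy_claim R L).
Proof.
have claim_of_inj (alpha : 'I_L -> R) : injective (omega alpha) -> toy_claim alpha.
  by case: L hL alpha => // n _ alpha /toy_claim_of_omega_inj.
pose hyperplane (t : 'I_L * 'I_L * 'I_7) (x : 'I_L -> R) :=
  (forall i, - 2^-1 < x i < 2^-1) /\
  \sum_q (lap_coef R t.1.1 q - lap_coef R t.1.2 q) * x q = ((t.2 : nat)%:Z - 3)%:~R.
pose s := [seq t <- enum [set: 'I_L * 'I_L * 'I_7] | t.1.1 != t.1.2].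
apply: lebesgue_null_sub (lebesgue_null_bigcup hL (N := hyperplane) (s := s) _).
  move=> alpha [in_cube not_claim].
  have : ~ injective (omega alpha) by move/claim_of_inj.
  move=> /injectiveP /injectivePn [i [j i_j omega_ij]].
  have [u eq_u] := omega_collision in_cube omega_ij.
  by exists (i, j, u); [rewrite mem_filter i_j mem_enum in_setT | split].
move=> [[i j] u]; rewrite mem_filter => /andP [/= i_j _].
exact: lebesgue_null_hyperplane hL _ _ _ (lap_coef_sub_neq0 R i_j).
Qed.
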